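(* Let $k\in[n-1]$, $w\in S_n^{k\searrow}$, and suppose there is an increasing $k$-chain from some $u$ to $w$. Suppose some step $u'\lessdot_k w'$ of this chain exchanges the values $a<b$, and that $b$ is at position $i$ in $w'$. Then: (1) $b$ is not among $u(1),\dots,u(k)$; (2) for every $c$ with $a<c<b$, $u^{-1}(c)<i$; (3) for every $c$ with $a<c<b$, the value $c$ is not exchanged by any step of the chain.
   Context: Permutations in one-line notation; $wt_{i,j}$ is $w$ with positions $i<j$ swapped; $\ell$ the number of inversions. $u\lessdot w$ iff $w=ut_{i,j}$, $i<j$, $\ell(w)=\ell(u)+1$; $u\lessdot_k w$ iff moreover $i\le k<j$. A $k$-chain $v_1\lessdot_k\cdots\lessdot_k v_d$ is increasing if the smaller of the two values exchanged at each step strictly increases along the chain. $S_n^{k\searrow}=\{v\in S_n: v(k+1)>\dots>v(n)\}$. *)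

(* Permutations of 'I_n = {0,...,n-1}; positions and values
   are 0-based (shifted down by one from the paper's 1-based convention). *)
From mathcomp Require Import all_boot all_fingroup.
Set Implicit Arguments. Unset Strict Implicit. Unset Printing Implicit Defensive.

Definition ell n (w : 'S_n) : nat :=
  #|[set p : 'I_n * 'I_n | (p.1 < p.2)%N && (w p.2 < w p.1)%N]|.

(* w t_{i,j} : w with positions i and j swapped, i.e. the function
   p |-> w (t_{i,j} p).  In mathcomp, (s * t) x = t (s x). *)
Definition swap_pos n (w : 'S_n) (i j : 'I_n) : 'S_n := (tperm i j * w)%g.

(* kstep k u w a b : u <._k w via w = u t_{i,j} with i < j,
   i <= k < j (1-based), i.e. i < k <= j (0-based), ell w = ell u + 1,
   and the values exchanged are a = u(i) and b = u(j). *)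
Definition kstep n (k : nat) (u w : 'S_n) (a b : 'I_n) : Prop :=
  exists i j : 'I_n,
    [/\ (i < j)%N, (i < k)%N & (k <= j)%N] /\
    [/\ w = swap_pos u i j, ell w = (ell u).+1, a = u i & b = u j].

Definition kcover n (k : nat) (u w : 'S_n) : Prop :=
  exists a b : 'I_n, kstep k u w a b.

(* The chain v_1 <._k v_2 <._k ... <._k v_d is the sequence s = [v_1; ...; v_d]
   (d >= 1).  It is increasing if the smaller exchanged value strictly
   increases from each step to the next. *)
Definition inc_kchain n (k : nat) (s : seq 'S_n) : Prop :=
  (forall m, (m.+1 < size s)%N -> kcover k (nth 1%g s m) (nth 1%g s m.+1)) /\
  (forall m, (m.+2 < size s)%N ->
     forall a b a' b' : 'I_n,
       kstep k (nth 1%g s m) (nth 1%g s m.+1) a b ->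
       kstep k (nth 1%g s m.+1) (nth 1%g s m.+2) a' b' ->
       (minn a b < minn a' b')%N).

(* S_n^{k \searrow}: v(k+1) > ... > v(n) (1-based), i.e. v is strictly
   decreasing on the 0-based positions k, ..., n-1. *)
Definition dec_after n (k : nat) (v : 'S_n) : Prop :=
  forall p q : 'I_n, (k <= p)%N -> (p < q)%N -> (v q < v p)%N.

From mathcomp Require Import all_boot all_fingroup zify.
Set Implicit Arguments. Unset Strict Implicit. Unset Printing Implicit Defensive.

(* A k-cover u <._k u t_{p,q} (p < k <= q) moves the smaller value x = u(p) to
   the right block and the larger value y = u(q) to the left block, and no
   position strictly between p and q carries a value strictly between x and y,
   since otherwise the length would grow by at least 3.  Hence values in the
   left block only increase and values in the right block only decrease, a
   value can leave a left position only as the smaller value of a step, and a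
   value can enter a right position only as the smaller value of a step.  Since
   the smaller values increase strictly along the chain, the smaller value of a
   step is never moved again.

   Now fix the step exchanging a < b.  The value a stays at its new right
   position until w, so the decreasing tail of w puts only values below a to its
   right; by the cover condition every c in (a, b) therefore lies to the left of
   a at the start of that step, i.e. left of the position where b arrives.  Tracing c backwards and forwards with the rules above shows
   that c is never exchanged, so it never moves, which gives (2) and (3).  For
   (1): b would have to leave a left position as the smaller value of an earlier
   step, but those are below a. *)

Lemma swap_posE n (u : 'S_n) i j x : swap_pos u i j x = u (tperm i j x).
Proof. by rewrite /swap_pos permM. Qed.

Section Inversions.
Variables (n : nat) (i j : 'I_n).

Definition tperm_pair (x : 'I_n * 'I_n) : 'I_n * 'I_n :=
  if tperm i j x.1 < tperm i j x.2 then (tperm i j x.1, tperm i j x.2) else x.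

Lemma tperm_pair_inj : {in [pred x : 'I_n * 'I_n | x.1 < x.2] &, injective tperm_pair}.
Proof.
move=> [x1 x2] [y1 y2]; rewrite !inE /tperm_pair /= => lt_x lt_y.
case: ifP => tx; case: ifP => ty [e1 e2].
- by rewrite (perm_inj e1) (perm_inj e2).
- by move: ty; rewrite -e1 -e2 !tpermK lt_x.
- by move: tx; rewrite e1 e2 !tpermK lt_y.
- by rewrite e1 e2.
Qed.

Lemma ell_swap_lt (u : 'S_n) : i < j -> u j < u i -> ell (swap_pos u i j) < ell u.
Proof.
move=> lt_ij lt_u; rewrite /ell [X in _ < X](cardsD1 (i, j)) inE /= lt_ij lt_u add1n ltnS.
(* tperm_pair injects the inversions of u t_{i,j} into those of u other than (i, j). *)
rewrite -(card_in_imset (sub_in2 _ tperm_pair_inj)); last by move=> x; rewrite !inE => /andP[].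
apply/subset_leq_card/subsetP => _ /imsetP[[x1 x2] + ->].
rewrite !inE /= !swap_posE => /andP[lt_x lt_ux]; rewrite /tperm_pair /=.
by case: ifP; rewrite /= xpair_eqE; move: lt_x lt_ux;
  do 2![case: tpermP => [->|->|/val_eqP /= ? /val_eqP /= ?]]; rewrite -?val_eqE /=; lia.
Qed.
End Inversions.

Lemma swap_pos_tperm3 n (u : 'S_n) (i r j : 'I_n) : i != j -> r != j ->
  swap_pos (swap_pos (swap_pos (swap_pos u i j) i r) r j) i r = u.
Proof.
move=> ij rj; rewrite /swap_pos !mulgA.
have -> : (tperm i r * tperm r j * tperm i r)%g = tperm i j.
  by rewrite -{1}tpermV -mulgA -conjgE tpermJ tpermR tpermD // eq_sym.
by rewrite tperm2 mul1g.
Qed.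

(* Undoing t_{i,j} by the three swaps of swap_pos_tperm3 removes an inversion each time. *)
Lemma ell_swap_add3 n (u : 'S_n) (i r j : 'I_n) : i < r < j -> u i < u r < u j ->
  ell u + 3 <= ell (swap_pos u i j).
Proof.
move=> /andP[ir rj] /andP[uir urj].
have [ne_ir ne_rj ne_ij] : [/\ i != r, r != j & i != j].
  by rewrite -!val_eqE /= !neq_ltn ir rj (ltn_trans ir rj).
have ne_ri : r != i by rewrite eq_sym.
have ne_jr : j != r by rewrite eq_sym.
have ne_ji : j != i by rewrite eq_sym.
have tpermE := (tpermL, tpermR, tpermD ne_ij ne_rj, tpermD ne_ir ne_jr, tpermD ne_ri ne_ji).
pose v := swap_pos u i j; pose v1 := swap_pos v i r; pose v2 := swap_pos v1 r j.
have lt_v : ell v1 < ell v by apply: ell_swap_lt; rewrite // /v !swap_posE !tpermE.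
have lt_v1 : ell v2 < ell v1.
  by apply: ell_swap_lt; rewrite // /v1 /v !swap_posE !tpermE (ltn_trans uir urj).
have lt_v2 : ell u < ell v2.
  rewrite -{1}(swap_pos_tperm3 u ne_ij ne_rj); apply: ell_swap_lt => //.
  by rewrite /v2 /v1 /v !swap_posE !tpermE.
by move: lt_v lt_v1 lt_v2; rewrite /v; lia.
Qed.

Record kexchange n (k : nat) (u w : 'S_n) (x y p q : 'I_n) : Prop := KExchange {
  kexchange_left : p < k;
  kexchange_right : k <= q;
  kexchange_swap : w = swap_pos u p q;
  kexchange_low : u p = x;
  kexchange_high : u q = y;
  kexchange_lt : x < y;
  kexchange_cover : forall r : 'I_n, p < r < q -> ~~ (x < u r < y) }.

Lemma kstep_exchange n k (u w : 'S_n) x y :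
  kstep k u w x y -> exists p q, kexchange k u w x y p q.
Proof.
case=> p [q [[pq pk kq] [-> ell_w -> ->]]]; exists p, q; split=> //.
- case: ltngtP => // [lt_u | /val_inj/perm_inj eq_pq].
  + by move: (ell_swap_lt pq lt_u); rewrite ell_w ltnNge leqnSn.
  + by move: pq; rewrite eq_pq ltnn.
- move=> r r_between; apply/negP => /(ell_swap_add3 r_between).
  by rewrite ell_w addn3 ltnNge leqnSn.
Qed.

Section KExchange.
Variables (n k : nat) (u w : 'S_n) (x y p q : 'I_n).
Hypothesis ex : kexchange k u w x y p q.

Lemma kexchange_after_left : w p = y.
Proof. by rewrite (kexchange_swap ex) swap_posE tpermL (kexchange_high ex). Qed.

Lemma kexchange_after_right : w q = x.
Proof. by rewrite (kexchange_swap ex) swap_posE tpermR (kexchange_low ex). Qed.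

Lemma kexchange_moved (r : 'I_n) : w r != u r -> r = p \/ r = q.
Proof.
rewrite (kexchange_swap ex) swap_posE.
by case: tpermP => [-> | -> | _ _]; [left | right | rewrite eqxx].
Qed.

Lemma kexchange_above (r : 'I_n) : p < r < q -> x < u r -> y < u r.
Proof.
move=> r_between lt_xr; have := kexchange_cover ex r_between; rewrite lt_xr /= -leqNgt.
rewrite leq_eqVlt -(kexchange_high ex) => /predU1P[/val_inj/perm_inj eq_qr | //].
by move: r_between; rewrite eq_qr ltnn andbF.
Qed.

Lemma kexchange_below (r : 'I_n) : p < r < q -> u r < y -> u r < x.
Proof.
move=> r_between lt_ry; have := kexchange_cover ex r_between; rewrite lt_ry andbT -leqNgt.
rewrite leq_eqVlt -(kexchange_low ex) => /predU1P[/val_inj/perm_inj eq_rp | //].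
by move: r_between; rewrite eq_rp ltnn.
Qed.

End KExchange.

Lemma kexchange_uniq n k (u w : 'S_n) x y p q x' y' p' q' :
  kexchange k u w x y p q -> kexchange k u w x' y' p' q' ->
  [/\ p = p', q = q', x = x' & y = y'].
Proof.
move=> ex ex'.
have moved_p : w p != u p.
  by rewrite (kexchange_after_left ex) (kexchange_low ex) eq_sym neq_ltn (kexchange_lt ex).
have moved_q : w q != u q.
  by rewrite (kexchange_after_right ex) (kexchange_high ex) neq_ltn (kexchange_lt ex).
have eq_p : p = p'.
  case: (kexchange_moved ex' moved_p) => // eq_pq'.
  by move: (kexchange_left ex); rewrite eq_pq' ltnNge (kexchange_right ex').
have eq_q : q = q'.
  case: (kexchange_moved ex' moved_q) => // eq_qp'.
  by move: (kexchange_left ex'); rewrite -eq_qp' ltnNge (kexchange_right ex).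
by rewrite -(kexchange_low ex) -(kexchange_high ex) -(kexchange_low ex')
  -(kexchange_high ex') eq_p eq_q.
Qed.

Section FirstLastChange.
Variables (T : eqType) (f : nat -> T).

Lemma first_change m n : m <= n -> f n != f m ->
  exists t, [/\ m <= t < n, f t = f m & f t.+1 != f t].
Proof.
elim: n => [|n IHn]; first by rewrite leqn0 => /eqP ->; rewrite eqxx.
rewrite leq_eqVlt => /predU1P[-> | lt_mn]; first by rewrite eqxx.
have le_mn : m <= n by [].
case: (eqVneq (f n) (f m)) => [eq_n | ne_n] ne_Sn.
  by exists n; rewrite le_mn leqnn eq_n.
by have [t [/andP[le_mt lt_tn] ? ?]] := IHn le_mn ne_n; exists t; rewrite le_mt ltnS ltnW.
Qed.

Lemma last_change m n : m <= n -> f n != f m ->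
  exists t, [/\ m <= t < n, f t.+1 = f n & f t.+1 != f t].
Proof.
elim: n => [|n IHn]; first by rewrite leqn0 => /eqP ->; rewrite eqxx.
rewrite leq_eqVlt => /predU1P[-> | lt_mn]; first by rewrite eqxx.
have le_mn : m <= n by [].
case: (eqVneq (f n.+1) (f n)) => [eq_Sn | ne_Sn] ne_m.
  have [|t [/andP[le_mt lt_tn] ? ?]] := IHn le_mn; first by rewrite -eq_Sn.
  by exists t; rewrite le_mt ltnS ltnW // eq_Sn.
by exists n; rewrite le_mn leqnn.
Qed.

End FirstLastChange.

Lemma homo_leq_bounded (T : Type) (R : T -> T -> Prop) (f : nat -> T) N :
  (forall x, R x x) -> (forall y x z, R x y -> R y z -> R x z) ->
  (forall i, i.+1 < N -> R (f i) (f i.+1)) -> forall i j, i <= j -> j < N -> R (f i) (f j).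
Proof.
move=> R_refl R_trans R_S i j le_ij jN.
apply: (@homo_leq_in T (gtn N) f R) => //; last exact: leq_ltn_trans le_ij jN.
- by move=> a b _ bN c /andP[_ /ltn_trans]; apply.
- by move=> a _; apply: R_S.
Qed.

Section IncreasingKChain.
Variables (n k : nat) (s : seq 'S_n).
Hypothesis chain : inc_kchain k s.

Local Notation v t := (nth 1%g s t).
Local Notation exch t := (kexchange k (v t) (v t.+1)).

Lemma exists_exch t : t.+1 < size s -> exists x y p q, exch t x y p q.
Proof.
by move=> /chain.1[x [y /kstep_exchange[p [q ex]]]]; exists x, y, p, q.
Qed.

Lemma exch_kstep t x y p q : t.+1 < size s -> exch t x y p q -> kstep k (v t) (v t.+1) x y.
Proof.
move=> /chain.1[x' [y' step']] ex; have [p' [q' ex']] := kstep_exchange step'.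
by have [_ _ -> ->] := kexchange_uniq ex ex'.
Qed.

Lemma exch_low_ltS t x y p q x' y' p' q' : t.+2 < size s ->
  exch t x y p q -> exch t.+1 x' y' p' q' -> x < x'.
Proof.
move=> tS ex ex'; have := chain.2 t tS x y x' y'.
rewrite /minn (kexchange_lt ex) (kexchange_lt ex'); apply.
  by apply: exch_kstep ex; apply: ltnW.
exact: exch_kstep ex'.
Qed.

Lemma exch_low_lt t t' x y p q x' y' p' q' : t < t' -> t'.+1 < size s ->
  exch t x y p q -> exch t' x' y' p' q' -> x < x'.
Proof.
elim: t' x' y' p' q' => // t' IH x' y' p' q'.
rewrite ltnS leq_eqVlt => /predU1P[<- | lt_tt'] t'S ex ex'; first exact: exch_low_ltS ex ex'.
have [x2 [y2 [p2 [q2 ex2]]]] := exists_exch (ltnW t'S).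
exact: ltn_trans (IH _ _ _ _ lt_tt' (ltnW t'S) ex ex2) (exch_low_ltS t'S ex2 ex').
Qed.

Lemma exch_low_le t t' x y p q x' y' p' q' : t <= t' -> t'.+1 < size s ->
  exch t x y p q -> exch t' x' y' p' q' -> x <= x'.
Proof.
rewrite leq_eqVlt => /predU1P[<- _ ex ex' | lt_tt' t'S ex ex'].
  by have [_ _ -> _] := kexchange_uniq ex ex'.
exact: ltnW (exch_low_lt lt_tt' t'S ex ex').
Qed.

Lemma left_moved t (r : 'I_n) : t.+1 < size s -> r < k -> v t.+1 r != v t r ->
  exists q, exch t (v t r) (v t.+1 r) r q.
Proof.
move=> tS rk moved; have [x [y [p [q ex]]]] := exists_exch tS.
case: (kexchange_moved ex moved) => eq_r; last first.
  by move: rk; rewrite eq_r ltnNge (kexchange_right ex).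
by exists q; rewrite eq_r (kexchange_low ex) (kexchange_after_left ex).
Qed.

Lemma right_moved t (r : 'I_n) : t.+1 < size s -> k <= r -> v t.+1 r != v t r ->
  exists p, exch t (v t.+1 r) (v t r) p r.
Proof.
move=> tS kr moved; have [x [y [p [q ex]]]] := exists_exch tS.
case: (kexchange_moved ex moved) => eq_r.
  by move: (kexchange_left ex); rewrite -eq_r ltnNge kr.
by exists p; rewrite eq_r (kexchange_high ex) (kexchange_after_right ex).
Qed.

Lemma left_mono (r : 'I_n) t t' : r < k -> t <= t' -> t' < size s -> v t r <= v t' r.
Proof.
move=> rk; apply: (homo_leq_bounded (f := fun t => v t r) leqnn leq_trans) => i iS.
case: (eqVneq (v i.+1 r) (v i r)) => [-> // | moved].
by have [q ex] := left_moved iS rk moved; apply: ltnW (kexchange_lt ex).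
Qed.

Lemma right_mono (r : 'I_n) t t' : k <= r -> t <= t' -> t' < size s -> v t' r <= v t r.
Proof.
move=> kr; apply: (homo_leq_bounded (f := fun t => v t r) (R := fun a b => b <= a) leqnn).
  by move=> y x z le_yx le_zy; apply: leq_trans le_zy le_yx.
move=> i iS.
case: (eqVneq (v i.+1 r) (v i r)) => [-> // | moved].
by have [p ex] := right_moved iS kr moved; apply: ltnW (kexchange_lt ex).
Qed.

Lemma left_first_move (r : 'I_n) T T' : r < k -> T <= T' -> T' < size s ->
  v T' r != v T r -> exists t q, T <= t < T' /\ exch t (v T r) (v t.+1 r) r q.
Proof.
move=> rk le_TT' T'S moved.
have [t [/andP[le_Tt lt_tT'] eq_r moved_t]] := first_change (f := fun t => v t r) le_TT' moved.
have [q ex] := left_moved (leq_ltn_trans lt_tT' T'S) rk moved_t.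
by exists t, q; rewrite le_Tt lt_tT' -eq_r.
Qed.

Lemma left_last_move (r : 'I_n) T T' : r < k -> T <= T' -> T' < size s ->
  v T' r != v T r -> exists t q, T <= t < T' /\ exch t (v t r) (v T' r) r q.
Proof.
move=> rk le_TT' T'S moved.
have [t [/andP[le_Tt lt_tT'] eq_r moved_t]] := last_change (f := fun t => v t r) le_TT' moved.
have [q ex] := left_moved (leq_ltn_trans lt_tT' T'S) rk moved_t.
by exists t, q; rewrite le_Tt lt_tT' -eq_r.
Qed.

Lemma right_last_move (r : 'I_n) T T' : k <= r -> T <= T' -> T' < size s ->
  v T' r != v T r -> exists t p, T <= t < T' /\ exch t (v T' r) (v t r) p r.
Proof.
move=> kr le_TT' T'S moved.
have [t [/andP[le_Tt lt_tT'] eq_r moved_t]] := last_change (f := fun t => v t r) le_TT' moved.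
have [p ex] := right_moved (leq_ltn_trans lt_tT' T'S) kr moved_t.
by exists t, p; rewrite le_Tt lt_tT' -eq_r.
Qed.

Lemma left_kept_until (r : 'I_n) T T' t0 x0 y0 p0 q0 : r < k -> T <= T' -> T' <= t0 ->
  t0.+1 < size s -> exch t0 x0 y0 p0 q0 -> x0 <= v T r -> v T' r = v T r.
Proof.
move=> rk le_TT' le_T't0 t0S ex0 le_x0; apply/eqP; apply: contraTT le_x0 => moved.
have T'S : T' < size s by apply: leq_ltn_trans le_T't0 (ltnW t0S).
have [t [q [/andP[_ lt_tT'] ex]]] := left_first_move rk le_TT' T'S moved.
by rewrite -ltnNge (exch_low_lt (leq_trans lt_tT' le_T't0) t0S ex ex0).
Qed.

Lemma left_kept_from (r : 'I_n) T T' x0 y0 p0 q0 : r < k -> T <= T' -> T' < size s ->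
  exch T x0 y0 p0 q0 -> v T r < x0 -> v T' r = v T r.
Proof.
move=> rk le_TT' T'S ex0 lt_x0; apply/eqP; apply: contraTT lt_x0 => moved.
have [t [q [/andP[le_Tt lt_tT'] ex]]] := left_first_move rk le_TT' T'S moved.
by rewrite -leqNgt (exch_low_le le_Tt (leq_ltn_trans lt_tT' T'S) ex0 ex).
Qed.

Lemma right_kept_until (r : 'I_n) T T' t0 x0 y0 p0 q0 : k <= r -> T <= T' -> T' <= t0 ->
  t0.+1 < size s -> exch t0 x0 y0 p0 q0 -> x0 <= v T' r -> v T' r = v T r.
Proof.
move=> kr le_TT' le_T't0 t0S ex0 le_x0; apply/eqP; apply: contraTT le_x0 => moved.
have T'S : T' < size s by apply: leq_ltn_trans le_T't0 (ltnW t0S).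
have [t [p [/andP[_ lt_tT'] ex]]] := right_last_move kr le_TT' T'S moved.
by rewrite -ltnNge (exch_low_lt (leq_trans lt_tT' le_T't0) t0S ex ex0).
Qed.

Lemma right_kept_from (r : 'I_n) T T' x0 y0 p0 q0 : k <= r -> T <= T' -> T' < size s ->
  exch T x0 y0 p0 q0 -> v T' r < x0 -> v T' r = v T r.
Proof.
move=> kr le_TT' T'S ex0 lt_x0; apply/eqP; apply: contraTT lt_x0 => moved.
have [t [p [/andP[le_Tt lt_tT'] ex]]] := right_last_move kr le_TT' T'S moved.
by rewrite -leqNgt (exch_low_le le_Tt (leq_ltn_trans lt_tT' T'S) ex0 ex).
Qed.

Lemma low_value_stays t x y p q T : exch t x y p q -> t < T -> T < size s -> v T q = x.
Proof.
move=> ex lt_tT TS; have kq := kexchange_right ex.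
rewrite -(kexchange_after_right ex); apply/eqP; apply: contraT => moved.
have [t' [p' [/andP[lt_tt' lt_t'T] ex']]] := right_last_move kq lt_tT TS moved.
have := exch_low_lt lt_tt' (leq_ltn_trans lt_t'T TS) ex ex'.
by rewrite -(kexchange_after_right ex) ltnNge (right_mono kq lt_tT TS).
Qed.

Section BetweenValues.
Variables (m : nat) (a b pm qm : 'I_n).
Hypothesis m_S : m.+1 < size s.
Hypothesis exm : exch m a b pm qm.
Hypothesis last_dec : dec_after k (v (size s).-1).

Let m_last : m < (size s).-1. Proof. by rewrite ltn_predRL. Qed.
Let last_S : (size s).-1 < size s. Proof. by rewrite ltn_predL (ltn_trans _ m_S). Qed.

Lemma right_of_exch_below (r : 'I_n) : qm < r -> v m r < a.
Proof.
move=> lt_qr; have kr : k <= r := leq_trans (kexchange_right exm) (ltnW lt_qr).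
have lt_ra : v (size s).-1 r < a.
  by rewrite -(low_value_stays exm m_last last_S); apply: last_dec (kexchange_right exm) lt_qr.
by rewrite -(right_kept_from kr (ltnW m_last) last_S exm lt_ra).
Qed.

Lemma between_left_at (c : 'I_n) : a < c < b -> (v m)^-1%g c < pm.
Proof.
move=> /andP[ac cb]; set r := ((v m)^-1)%g c; have vr : v m r = c by rewrite permKV.
case: (ltngtP r pm) => [// | lt_pr | /val_inj eq_rp]; last first.
  by move: ac; rewrite -vr eq_rp (kexchange_low exm) ltnn.
case: (ltngtP r qm) => [lt_rq | lt_qr | /val_inj eq_rq].
- by move: cb; rewrite -vr ltnNge ltnW // (kexchange_above exm) ?lt_pr ?vr.
- by move: ac; rewrite -vr ltnNge ltnW // right_of_exch_below.
- by move: cb; rewrite -vr eq_rq (kexchange_high exm) ltnn.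
Qed.

Lemma between_not_low_after (c : 'I_n) t y p q : a < c < b -> m < t -> t.+1 < size s ->
  ~ exch t c y p q.
Proof.
move=> c_between lt_mt tS ex; case/andP: (c_between) => ac cb.
have lt_rpm := between_left_at c_between; set r := ((v m)^-1)%g c in lt_rpm.
have pmk := kexchange_left exm; have kq := kexchange_right ex.
have eq_pr : p = r.
  apply: (@perm_inj _ (v t)); rewrite (kexchange_low ex).
  by rewrite (left_kept_until (ltn_trans lt_rpm pmk) (ltnW lt_mt) (leqnn t) tS ex) permKV.
have vt_pm : v t pm = b.
  rewrite -(kexchange_after_left exm) (left_kept_until pmk lt_mt (leqnn t) tS ex) //.
  by rewrite (kexchange_after_left exm) ltnW.
have lt_yb : y < b.
  rewrite -vt_pm (kexchange_above ex) ?vt_pm // eq_pr lt_rpm.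
  exact: leq_trans pmk kq.
have w_q : v (size s).-1 q = c by apply: low_value_stays ex _ last_S; rewrite ltn_predRL.
have w_qm : v (size s).-1 qm = a := low_value_stays exm m_last last_S.
have lt_qqm : q < qm.
  case: (ltngtP q qm) => [// | lt_qmq | /val_inj eq_qqm].
    by move: ac; rewrite -w_q -w_qm ltnNge (ltnW (last_dec (kexchange_right exm) lt_qmq)).
  by move: ac; rewrite -w_q eq_qqm w_qm ltnn.
have lt_b_vmq : b < v m q.
  apply: (kexchange_above exm); first by rewrite lt_qqm (leq_trans pmk kq).
  apply: ltn_trans ac (leq_trans (kexchange_lt ex) _).
  by rewrite -(kexchange_high ex) (right_mono kq (ltnW lt_mt) (ltnW tS)).
have := right_kept_until kq (ltnW lt_mt) (leqnn t) tS ex.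
rewrite (kexchange_high ex) => /(_ (ltnW (kexchange_lt ex))) eq_y.
by move: lt_yb; rewrite eq_y ltnNge ltnW.
Qed.

Lemma between_not_low (c : 'I_n) t y p q : a < c < b -> t.+1 < size s -> ~ exch t c y p q.
Proof.
move=> c_between tS ex; case/andP: (c_between) => ac _.
case: (ltngtP t m) => [lt_tm | lt_mt | eq_tm].
- by move: ac; rewrite ltnNge ltnW // (exch_low_lt lt_tm m_S ex exm).
- exact: between_not_low_after c_between lt_mt tS ex.
- by move: ex ac; rewrite eq_tm => /(kexchange_uniq exm)[_ _ <- _]; rewrite ltnn.
Qed.

Lemma between_not_high_before (c : 'I_n) t x p q : a < c < b -> t < m -> ~ exch t x c p q.
Proof.
move=> c_between lt_tm ex; case/andP: (c_between) => ac _.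
have pk := kexchange_left ex; have pmk := kexchange_left exm.
have vm_p : v m p = c.
  rewrite -(kexchange_after_left ex) (left_kept_until pk lt_tm (leqnn m) m_S exm) //.
  by rewrite (kexchange_after_left ex) ltnW.
have lt_ppm : p < pm by have := between_left_at c_between; rewrite -vm_p permK.
have lt_vt_pm : v t pm < x.
  apply: (kexchange_below ex); first by rewrite lt_ppm (leq_trans pmk (kexchange_right ex)).
  apply: leq_ltn_trans ac; rewrite -(kexchange_low exm).
  exact: left_mono pmk (ltnW lt_tm) (ltnW m_S).
have := left_kept_from pmk (ltnW lt_tm) (ltnW m_S) ex lt_vt_pm.
move: (exch_low_lt lt_tm m_S ex exm); rewrite -(kexchange_low exm) => + eq_pm.
by rewrite eq_pm ltnNge ltnW.
Qed.

Lemma between_not_high (c : 'I_n) t x p q : a < c < b -> t.+1 < size s -> ~ exch t x c p q.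
Proof.
move=> c_between tS ex; case/andP: (c_between) => _ cb.
case: (ltngtP t m) => [lt_tm | lt_mt | eq_tm].
- exact: between_not_high_before c_between lt_tm ex.
- have lt_rpm := between_left_at c_between; set r := ((v m)^-1)%g c in lt_rpm.
  have rk : r < k := ltn_trans lt_rpm (kexchange_left exm).
  have vt_r : v t r = c.
    rewrite (left_kept_until rk (ltnW lt_mt) (leqnn t) tS ex) ?permKV //.
    exact: ltnW (kexchange_lt ex).
  have eq_rq : r = q by apply: (@perm_inj _ (v t)); rewrite vt_r (kexchange_high ex).
  by move: rk; rewrite eq_rq ltnNge (kexchange_right ex).
- by move: ex cb; rewrite eq_tm => /(kexchange_uniq exm)[_ _ _ <-]; rewrite ltnn.
Qed.

Lemma between_not_exchanged (c : 'I_n) t x y : a < c < b -> t.+1 < size s ->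
  kstep k (v t) (v t.+1) x y -> c != x /\ c != y.
Proof.
move=> c_between tS /kstep_exchange[p [q ex]].
by split; apply/eqP => eq_c; move: ex; rewrite -eq_c;
  [apply: between_not_low | apply: between_not_high].
Qed.

Lemma between_initially_left (c : 'I_n) : a < c < b -> (v 0)^-1%g c < pm.
Proof.
move=> c_between; have lt_rpm := between_left_at c_between; set r := ((v m)^-1)%g c in lt_rpm.
have rk : r < k := ltn_trans lt_rpm (kexchange_left exm).
suff v0_r : v 0 r = c by rewrite -v0_r permK.
rewrite -[RHS](permKV (v m) c) -/r; apply/eqP/negPn/negP; rewrite eq_sym => moved.
have [t [q [/andP[_ lt_tm] ex]]] := left_last_move rk (leq0n m) (ltnW m_S) moved.
move: ex; rewrite permKV; apply: between_not_high => //.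
exact: leq_ltn_trans lt_tm (ltnW m_S).
Qed.

Lemma high_not_initially_left (p : 'I_n) : p < k -> v 0 p != b.
Proof.
move=> pk; apply/eqP => v0_p.
have := left_kept_until pk (leq0n m) (leqnn m) m_S exm; rewrite v0_p => /(_ (ltnW (kexchange_lt exm))).
rewrite -(kexchange_high exm) => /perm_inj eq_p.
by move: pk; rewrite eq_p ltnNge (kexchange_right exm).
Qed.

End BetweenValues.

End IncreasingKChain.

Theorem lemma3p14 (n k : nat) (s : seq 'S_n) (u w : 'S_n)
  (m : nat) (a b i : 'I_n) :
  (0 < k)%N -> (k < n)%N ->
  dec_after k w ->
  (0 < size s)%N -> head 1%g s = u -> last 1%g s = w ->
  inc_kchain k s ->
  (m.+1 < size s)%N ->
  (kstep k (nth 1%g s m) (nth 1%g s m.+1) a b \/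
   kstep k (nth 1%g s m) (nth 1%g s m.+1) b a) ->
  (a < b)%N ->
  nth 1%g s m.+1 i = b ->
  [/\ (forall p : 'I_n, (p < k)%N -> u p != b),
      (forall c : 'I_n, (a < c < b)%N -> ((u^-1)%g c < i)%N) &
      (forall c : 'I_n, (a < c < b)%N ->
         forall m', (m'.+1 < size s)%N ->
         forall x y : 'I_n, kstep k (nth 1%g s m') (nth 1%g s m'.+1) x y ->
         c != x /\ c != y)].
Proof.
move=> _ _ w_dec _ <- w_last chain m_S step lt_ab vi.
have [pm [qm exm]] : exists pm qm, kexchange k (nth 1%g s m) (nth 1%g s m.+1) a b pm qm.
  case: step => /kstep_exchange[pm [qm ex]]; first by exists pm, qm.
  by move: lt_ab; rewrite ltnNge ltnW // (kexchange_lt ex).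
have -> : i = pm by apply: (@perm_inj _ (nth 1%g s m.+1)); rewrite vi (kexchange_after_left exm).
have last_dec : dec_after k (nth 1%g s (size s).-1) by rewrite nth_last w_last.
rewrite -nth0; split.
- exact: (high_not_initially_left chain m_S exm).
- exact: (between_initially_left chain m_S exm last_dec).
- move=> c c_between t tS x y.
  exact: (between_not_exchanged chain m_S exm last_dec c_between tS).
Qed.
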